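(* There exists a countable nilpotent group $G$ of nilpotency class $2$ such that the subgroup conjugacy relation of $G$ on $\mathrm{Sub}(G)$ is not smooth.
   Context: For a countable group $G$, $\mathrm{Sub}(G)$ is the set of subgroups of $G$ with the (Polish) topology inherited from $2^G=\{0,1\}^G$. The subgroup conjugacy relation is the equivalence relation on $\mathrm{Sub}(G)$ given by $H\sim L$ iff $gHg^{-1}=L$ for some $g\in G$. A Borel equivalence relation $E$ on a standard Borel space $X$ is smooth if there is a Borel map $f$ from $X$ to a standard Borel space with $x\mathrel{E}y\iff f(x)=f(y)$. *)

From mathcomp Require Import all_boot.
From mathcomp Require Import boolp classical_sets measurable_structure.
Set Implicit Arguments. Unset Strict Implicit. Unset Printing Implicit Defensive.
Local Open Scope classical_set_scope.

Definition is_group (G : Type) (mul : G -> G -> G) (inv : G -> G) (one : G) : Prop :=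
  [/\ (forall x y z, mul x (mul y z) = mul (mul x y) z),
      (forall x, mul one x = x), (forall x, mul x one = x),
      (forall x, mul (inv x) x = one) & (forall x, mul x (inv x) = one)].

Definition commutator (G : Type) (mul : G -> G -> G) (inv : G -> G) (x y : G) : G :=
  mul (mul (inv x) (inv y)) (mul x y).

Definition nilpotent_class2 (G : Type) (mul : G -> G -> G) (inv : G -> G) : Prop :=
  (forall x y z, mul (commutator mul inv x y) z = mul z (commutator mul inv x y)) /\
  (exists x y, mul x y <> mul y x).

Definition cylinders (X : Type) : set (set (X -> bool)) :=
  [set A | exists x b, A = [set S | S x = b]].

(* Borel sigma-algebra of the product (Cantor-type) space 2^X for countable X:
   it is generated by the cylinders. *)
Definition borel2 (X : Type) : set (set (X -> bool)) := <<s @cylinders X >>.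

Definition is_subgroup (G : Type) (mul : G -> G -> G) (inv : G -> G) (one : G)
  (S : G -> bool) : Prop :=
  S one /\ (forall x y, S x -> S y -> S (mul x (inv y))).

Definition Sub (G : Type) (mul : G -> G -> G) (inv : G -> G) (one : G) : set (G -> bool) :=
  [set S | is_subgroup mul inv one S].

Definition borel_Sub (G : Type) (mul : G -> G -> G) (inv : G -> G) (one : G)
  (A : set (G -> bool)) : Prop :=
  exists B, borel2 B /\ A = B `&` Sub mul inv one.

(* Subgroup conjugacy: H ~ L iff g H g^-1 = L for some g,
   i.e. x \in L <-> g^-1 x g \in H. *)
Definition subgroup_conj (G : Type) (mul : G -> G -> G) (inv : G -> G)
  (H L : G -> bool) : Prop :=
  exists g, forall x, L x = H (mul (mul (inv g) x) g).

(* Smoothness of the subgroup conjugacy relation: a Borel reduction to equality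
   on the standard Borel space 2^nat (Cantor space). *)
Definition conj_smooth (G : Type) (mul : G -> G -> G) (inv : G -> G) (one : G) : Prop :=
  exists f : (G -> bool) -> (nat -> bool),
    (forall B, borel2 B -> borel_Sub mul inv one (Sub mul inv one `&` f @^-1` B)) /\
    (forall H L, Sub mul inv one H -> Sub mul inv one L ->
       (subgroup_conj mul inv H L <-> f H = f L)).

(* The heart of the matter is that E0, eventual equality on Cantor space 2^N,
   is not smooth: a map with the Baire property that is invariant under finite
   bit flips is constant on a comeager set (a topological zero-one law), while
   every E0-class is meager.  E0 embeds into subgroup conjugacy of the
   Heisenberg group G over the Boolean ring of finite subsets of N: x is sent
   to H_x = {(a, 0, a /\ x)}; conjugating by (0, p, 0) flips x along p, and
   conjugacy of H_x and H_y forces x and y to agree beyond the support of the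
   middle coordinate of the conjugator.  H_x depends continuously on x, so a
   Borel reduction of conjugacy to equality would yield a flip-invariant map
   with the Baire property separating E0-classes. *)
From Pilot Require Import Defs.
From mathcomp Require Import all_boot.
From mathcomp Require Import boolp classical_sets measurable_structure.
From mathcomp Require Import zify.
From Stdlib Require Import PeanoNat.
Set Implicit Arguments. Unset Strict Implicit.
Local Open Scope classical_set_scope.

Definition cantor := nat -> bool.

Definition cyl (x : cantor) (n : nat) : set cantor :=
  [set z | forall i, (i < n)%N -> z i = x i].

Definition cantor_open (U : set cantor) :=
  forall x, U x -> exists n, cyl x n `<=` U.

Definition nowhere_dense (D : set cantor) :=
  forall x n, exists y m, [/\ (n <= m)%N, (forall i, (i < n)%N -> y i = x i)
                             & forall z, cyl y m z -> ~ D z].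

Definition meager (M : set cantor) :=
  exists D : nat -> set cantor, (forall k, nowhere_dense (D k)) /\
                                (forall z, M z -> exists k, D k z).

Definition baire_property (A : set cantor) :=
  exists U, cantor_open U /\ meager [set z | ~ (A z <-> U z)].

Lemma meager_sub (M M' : set cantor) : M `<=` M' -> meager M' -> meager M.
Proof. by move=> MM' [D [nwD coverM']]; exists D; split=> // z /MM' /coverM'. Qed.

Lemma nowhere_dense0 : nowhere_dense set0.
Proof. by move=> x n; exists x, n; split=> // z _ []. Qed.

Lemma meager_nowhere_dense (D : set cantor) : nowhere_dense D -> meager D.
Proof. by move=> nwD; exists (fun _ => D); split=> // z Dz; exists 0. Qed.

Lemma meager_union (M : nat -> set cantor) :
  (forall k, meager (M k)) -> meager [set z | exists k, M k z].
Proof.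
move=> /choice[D mD].
exists (fun n => if (pickle_inv n : option (nat * nat)) is Some (k, j) then D k j
                 else set0); split.
  move=> n; case: pickle_inv => [[k j]|]; last exact: nowhere_dense0.
  exact: (proj1 (mD k)).
move=> z [k /(proj2 (mD k))[j Dz]]; exists (pickle (k, j)); by rewrite pickleK_inv.
Qed.

Lemma meagerU (A B : set cantor) : meager A -> meager B -> meager (A `|` B).
Proof.
move=> mA mB; apply: (meager_sub _ (@meager_union (fun k => if k is 0 then A else B) _)).
  by move=> z [Az|Bz]; [exists 0 | exists 1].
by case.
Qed.

Lemma nested_cyl_point (F : nat -> cantor * nat) :
  (forall k, ((F k).2 < (F k.+1).2)%N) ->
  (forall k i, (i < (F k).2)%N -> (F k.+1).1 i = (F k).1 i) ->
  exists z, forall k, cyl (F k).1 (F k).2 z.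
Proof.
move=> growF agreeF.
have radius_ge k : (k <= (F k).2)%N.
  by elim: k => [//|k IHk]; have := growF k; lia.
have radius_mono k d : ((F k).2 <= (F (k + d)).2)%N.
  elim: d => [|d IHd]; first by rewrite addn0.
  by rewrite addnS; have := growF (k + d); lia.
have agree k d i : (i < (F k).2)%N -> (F (k + d)).1 i = (F k).1 i.
  elim: d => [|d IHd] ik; first by rewrite addn0.
  by rewrite addnS agreeF ?IHd //; exact: leq_trans ik (radius_mono k d).
exists (fun i => (F i.+1).1 i) => k i ik.
case: (leqP i.+1 k) => [ik1|ki].
  by rewrite -(subnKC ik1) agree //; have := radius_ge i.+1; lia.
by rewrite -(subnKC (ltnW ki)) agree.
Qed.

Lemma meager_neqT (M : set cantor) : meager M -> exists x, ~ M x.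
Proof.
move=> [D [nwD coverM]].
have /choice[step stepP] : forall kxn : nat * (cantor * nat), exists ym : cantor * nat,
    [/\ (kxn.2.2 < ym.2)%N, (forall i, (i < kxn.2.2)%N -> ym.1 i = kxn.2.1 i)
       & forall z, cyl ym.1 ym.2 z -> ~ D kxn.1 z].
  move=> -[k [x n]] /=; have [y [m [nm yx yD]]] := nwD k x n.
  exists (y, m.+1); split=> //= z zy.
  by apply: yD => i im; apply: zy; lia.
pose F k := iteri k (fun k xn => step (k, xn)) ((fun=> false), 0).
have FS k : F k.+1 = step (k, F k) by rewrite /F iteriS.
have [z zF] : exists z, forall k, cyl (F k).1 (F k).2 z.
  by apply: nested_cyl_point => k; rewrite FS; case: (stepP (k, F k)).
exists z => /coverM[k Dz]; have [_ _ stepD] := stepP (k, F k).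
by apply: (stepD z) => //; rewrite -FS; exact: zF.
Qed.

Lemma not_meagerT : ~ meager setT.
Proof. by move=> /meager_neqT[x]; apply. Qed.

Lemma baire_property_ext (A A' : set cantor) :
  (forall z, A z <-> A' z) -> baire_property A -> baire_property A'.
Proof.
move=> AA' [U [oU mU]]; exists U; split=> //; apply: meager_sub mU => z nAU AU.
by apply: nAU; rewrite -AA'.
Qed.

Lemma baire_property_open (U : set cantor) : cantor_open U -> baire_property U.
Proof.
move=> oU; exists U; split=> //.
by apply: meager_sub (meager_nowhere_dense nowhere_dense0) => z; apply.
Qed.

Definition exterior (U : set cantor) : set cantor :=
  [set x | exists n, forall z, cyl x n z -> ~ U z].

Lemma exterior_open (U : set cantor) : cantor_open (exterior U).
Proof.
move=> x [n xU]; exists n => z zx; exists n => y yz; apply: xU => i ni.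
by rewrite yz // zx.
Qed.

Lemma boundary_nowhere_dense (U : set cantor) :
  cantor_open U -> nowhere_dense [set z | ~ U z /\ ~ exterior U z].
Proof.
move=> oU x n; have [[y [yx Uy]]|noU] := pselect (exists y, cyl x n y /\ U y).
  have [m yU] := oU y Uy; exists y, (maxn n m); split=> [|//|z zy [nUz _]].
    exact: leq_maxl.
  by apply/nUz/yU => i im; apply: zy; have := leq_maxr n m; lia.
exists x, n; split=> // z zx [_]; apply; exists n => y yz Uy.
by apply: noU; exists y; split=> // i ni; rewrite yz // zx.
Qed.

Lemma baire_property_compl (A : set cantor) :
  baire_property A -> baire_property [set z | ~ A z].
Proof.
move=> [U [oU mU]]; exists (exterior U); split; first exact: exterior_open.
apply: meager_sub (meagerU mU (meager_nowhere_dense (boundary_nowhere_dense oU))).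
move=> z /= nAW; have [Uz|nUz] := pselect (U z).
  have nWz : ~ exterior U z by move=> [n zU]; exact: (zU z).
  by left=> AU; apply: nAW; split=> [nAz|/nWz//]; case: nAz; apply/AU.
have [Wz|nWz] := pselect (exterior U z); last by right.
by left=> AU; apply: nAW; split=> // _ Az; exact/nUz/AU.
Qed.

Lemma baire_property_union (A : nat -> set cantor) :
  (forall k, baire_property (A k)) -> baire_property [set z | exists k, A k z].
Proof.
move=> /choice[U AU]; exists [set z | exists k, U k z]; split.
  move=> x [k Ux]; have [n xU] := (proj1 (AU k)) x Ux.
  by exists n => z /xU Uz; exists k.
apply: meager_sub (meager_union (fun k => proj2 (AU k))) => z nAU.
apply: contrapT => /forallNP diff; apply: nAU.
by split=> -[k kz]; exists k; apply: contrapT => nz; apply: (diff k) => AUk;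
  apply: nz; [rewrite -AUk | rewrite AUk].
Qed.

Definition flip (p : nat) (x : cantor) : cantor := fun i => x i (+) Nat.testbit p i.

Lemma flipK p : involutive (flip p).
Proof. by move=> x; apply: funext => i; rewrite /flip -addbA addbb addbF. Qed.

Lemma meager_flip p (M : set cantor) : meager M -> meager [set z | M (flip p z)].
Proof.
move=> [D [nwD coverM]]; exists (fun k z => D k (flip p z)).
split; last by move=> z /coverM.
move=> k x n; have [y [m [nm yx yD]]] := nwD k (flip p x) n.
exists (flip p y), m; split=> // [i ni|z zy].
  by rewrite /flip yx // /flip -addbA addbb addbF.
by apply: yD => i im; rewrite /flip zy // /flip -addbA addbb addbF.
Qed.

Lemma testbit_ge n i : (n <= i)%N -> Nat.testbit n i = false.
Proof.
case: n => [|n] ni; first exact: Nat.bits_0.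
by apply: Nat.bits_above_log2; have := Nat.log2_lt_lin n.+1; lia.
Qed.

Lemma exists_testbit_prefix (w : cantor) n :
  exists p, forall i, (i < n)%N -> Nat.testbit p i = w i.
Proof.
elim: n => [|n [p pw]]; first by exists 0.
have [pn|pn] := eqVneq (Nat.testbit p n) (w n).
  by exists p => i; rewrite ltnS leq_eqVlt => /predU1P[->|]; [|exact: pw].
exists (Nat.lxor p (2 ^ n)) => i; rewrite Nat.lxor_spec Nat.pow2_bits_eqb.
rewrite ltnS leq_eqVlt => /predU1P[->|ni].
  by rewrite Nat.eqb_refl; case: (w n) pn; case: Nat.testbit.
have /Nat.eqb_neq -> : n <> i by lia.
by rewrite pw //; case: (w i).
Qed.

(* The flips act transitively on the cylinders of a given length, so a
   flip-invariant set that is comeager in one cylinder is comeager. *)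
Lemma flip_zero_one (A : set cantor) : baire_property A ->
  (forall p x, A x -> A (flip p x)) -> meager A \/ meager [set z | ~ A z].
Proof.
move=> [U [oU mU]] flipA; have [[x Ux]|noU] := pselect (exists x, U x); last first.
  by left; apply: meager_sub mU => z Az AU; apply: noU; exists z; apply/AU.
right; have [n xU] := oU x Ux.
have mcylA : meager [set z | cyl x n z /\ ~ A z].
  by apply: meager_sub mU => z [zx nAz] AU; apply/nAz/AU/xU.
apply: meager_sub (meager_union (fun p => meager_flip p mcylA)) => z nAz.
have [p pz] := exists_testbit_prefix (fun i => z i (+) x i) n.
exists p; split; first by move=> i ni; rewrite /flip pz // addbA addbb.
by move=> /(flipA p); rewrite flipK.
Qed.

Definition eventually_eq (x y : cantor) := exists N, forall i, (N <= i)%N -> x i = y i.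

Lemma tail_eq_nowhere_dense (x0 : cantor) N :
  nowhere_dense [set x | forall i, (N <= i)%N -> x i = x0 i].
Proof.
move=> x n; pose j := (n + N)%N.
exists (fun i => if i == j then ~~ x0 j else x i), j.+1; split.
- by rewrite /j; lia.
- by move=> i ni; case: eqP => // ij; rewrite /j in ij; lia.
move=> z zx zx0; have := zx j (ltnSn j); rewrite eqxx zx0 ?leq_addl //.
by case: (x0 j).
Qed.

Lemma eventually_eq_meager (x0 : cantor) : meager [set x | eventually_eq x x0].
Proof.
exists (fun N => [set x | forall i, (N <= i)%N -> x i = x0 i]).
by split=> // N; exact: tail_eq_nowhere_dense.
Qed.

Section FlipInvariant.

Variable F : cantor -> nat -> bool.
Hypothesis F_baire : forall n, baire_property [set x | F x n].
Hypothesis F_flip : forall p x, F (flip p x) = F x.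

Lemma flip_invariant_generically_constant : exists x0, meager [set x | F x <> F x0].
Proof.
have /choice[v mv] : forall n, exists v : bool, meager [set x | F x n = ~~ v].
  move=> n; have flipA p x : F x n -> F (flip p x) n by rewrite F_flip.
  have [mA|mAc] := flip_zero_one (F_baire n) flipA.
    by exists false; apply: meager_sub mA => x /= ->.
  by exists true; apply: meager_sub mAc => x /= ->.
have mdiff := meager_union mv.
have eq_v x : ~ (exists n, F x n = ~~ v n) -> F x = v.
  move=> nFv; apply: funext => n; apply: contrapT => Fvn; apply: nFv; exists n.
  by move: Fvn; case: (F x n); case: (v n).
have [x0 /eq_v Fx0] := meager_neqT mdiff.
exists x0; apply: meager_sub mdiff => x; rewrite Fx0 => Fxv.
by apply: contrapT => /eq_v.
Qed.

(* Generic ergodicity of E0: F is constant off a meager set, while every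
   E0-class is meager. *)
Lemma flip_invariant_not_reduction : ~ (forall x y, F x = F y -> eventually_eq x y).
Proof.
move=> reduction; have [x0 mx0] := flip_invariant_generically_constant.
apply: not_meagerT; apply: meager_sub (meagerU mx0 (eventually_eq_meager x0)) => x _.
by have [Fx|Fx] := pselect (F x = F x0); [right; exact: reduction | left].
Qed.

End FlipInvariant.

(* A natural number stands for the finite set of its binary digits, so [lxor]
   is symmetric difference and [land] is intersection.  [heis] is the
   Heisenberg group over the Boolean ring of finite subsets of nat, with
   central third coordinate. *)
Definition heis := (nat * nat * nat)%type.

Definition hmul (x y : heis) : heis :=
  let: (a, b, c) := x in let: (a', b', c') := y in
  (Nat.lxor a a', Nat.lxor b b', Nat.lxor (Nat.lxor c c') (Nat.land b a')).

Definition hinv (x : heis) : heis :=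
  let: (a, b, c) := x in (a, b, Nat.lxor c (Nat.land b a)).

Definition hone : heis := (0, 0, 0).

Lemma heis_bits_inj (a b c a' b' c' : nat) :
  (forall i, Nat.testbit a i = Nat.testbit a' i) ->
  (forall i, Nat.testbit b i = Nat.testbit b' i) ->
  (forall i, Nat.testbit c i = Nat.testbit c' i) -> (a, b, c) = (a', b', c').
Proof. by move=> /Nat.bits_inj-> /Nat.bits_inj-> /Nat.bits_inj->. Qed.

Ltac case_bits := repeat match goal with
  | |- context [Nat.testbit ?x ?i] => destruct (Nat.testbit x i)
  | |- context [?f ?j] => is_var f; lazymatch type of f with
       | nat -> bool => destruct (f j) | cantor => destruct (f j) end
  end.
Ltac simpl_bits := repeat rewrite ?Nat.lxor_spec ?Nat.land_spec ?Nat.bits_0.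
Ltac heis_bitwise := apply: heis_bits_inj => i; simpl_bits; case_bits; reflexivity.

Lemma heis_group : is_group hmul hinv hone.
Proof.
split.
- by move=> [[a b] c] [[a' b'] c'] [[a'' b''] c''] /=; heis_bitwise.
- by move=> [[a b] c] /=; heis_bitwise.
- by move=> [[a b] c] /=; heis_bitwise.
- by move=> [[a b] c] /=; heis_bitwise.
- by move=> [[a b] c] /=; heis_bitwise.
Qed.

Lemma heis_class2 : nilpotent_class2 hmul hinv.
Proof.
split; last by exists (1, 0, 0), (0, 1, 0).
by move=> [[a b] c] [[a' b'] c'] [[a'' b''] c''] /=; heis_bitwise.
Qed.

Lemma hconjE a b c a' b' c' :
  hmul (hmul (hinv (a', b', c')) (a, b, c)) (a', b', c') =
  (a, b, Nat.lxor (Nat.lxor c (Nat.land b' a)) (Nat.land b a')).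
Proof. by rewrite /=; heis_bitwise. Qed.

(* The subgroup H_x = {(a, 0, a /\ x)} of [heis]; membership is decidable since
   only the digits below [a + c] matter. *)
Definition subgroup_of (x : cantor) (g : heis) : bool :=
  let: (a, b, c) := g in
  (b == 0)%N && all (fun i => Nat.testbit c i == Nat.testbit a i && x i) (iota 0 (a + c)).

Arguments subgroup_of : simpl never.

Lemma subgroup_ofP x a b c : subgroup_of x (a, b, c) <->
  b = 0 /\ forall i, Nat.testbit c i = Nat.testbit a i && x i.
Proof.
rewrite /subgroup_of; split=> [/andP[/eqP -> /allP acx]|[-> acx]].
  split=> // i; have [ilt|ige] := ltnP i (a + c).
    by apply/eqP/acx; rewrite mem_iota.
  by rewrite !testbit_ge //; lia.
by apply/andP; split=> //; apply/allP => i _; apply/eqP.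
Qed.

Lemma subgroup_of_Sub x : Defs.Sub hmul hinv hone (subgroup_of x).
Proof.
split; first by apply/subgroup_ofP; split=> // i; simpl_bits.
move=> [[a b] c] [[a' b'] c'] /subgroup_ofP[-> acx] /subgroup_ofP[-> acx'] /=.
apply/subgroup_ofP; split; first by apply: Nat.bits_inj => i; simpl_bits.
by move=> i; simpl_bits; rewrite acx acx'; case_bits.
Qed.

Lemma subgroup_of_flip p x :
  subgroup_conj hmul hinv (subgroup_of x) (subgroup_of (flip p x)).
Proof.
exists (0, p, 0) => -[[a b] c]; rewrite hconjE.
by apply/idP/idP => /subgroup_ofP[-> acx]; apply/subgroup_ofP; split=> // i;
  move: (acx i); rewrite /flip; simpl_bits; case_bits.
Qed.

Lemma subgroup_of_conj_eventually_eq x y :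
  subgroup_conj hmul hinv (subgroup_of x) (subgroup_of y) -> eventually_eq x y.
Proof.
move=> [[[a' b'] c'] conjxy]; exists b' => i b'i.
pose c := if y i then 2 ^ i else 0.
have ci : Nat.testbit c i = y i.
  by rewrite /c; case: (y i); rewrite ?Nat.pow2_bits_eqb ?Nat.eqb_refl ?Nat.bits_0.
have : subgroup_of y (2 ^ i, 0, c).
  apply/subgroup_ofP; split=> // j; rewrite Nat.pow2_bits_eqb.
  have [<-|/Nat.eqb_neq ij] := Nat.eqb_spec i j; first by rewrite ci.
  by rewrite /c; case: (y i); rewrite ?Nat.pow2_bits_eqb ?Nat.bits_0 ?ij.
rewrite conjxy hconjE => /subgroup_ofP[_ /(_ i)].
simpl_bits; rewrite ci Nat.pow2_bits_eqb Nat.eqb_refl testbit_ge //.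
by case: (x i); case: (y i).
Qed.

Lemma subgroup_of_cyl_open g b : cantor_open [set x | subgroup_of x g = b].
Proof.
move: g => [[a b'] c] x xgb; exists (a + c) => z zx; rewrite -xgb /subgroup_of.
congr (_ && _); apply: eq_in_all => i; rewrite mem_iota => /andP[_ ilt].
by rewrite zx.
Qed.

Lemma subgroup_of_borel_baire (B : set (heis -> bool)) :
  borel2 B -> baire_property [set x | B (subgroup_of x)].
Proof.
pose P := [set B : set (heis -> bool) | baire_property [set x | B (subgroup_of x)]].
suff : @borel2 heis `<=` P by apply.
apply: smallest_sub; last first.
  by move=> _ [g [b ->]]; exact: baire_property_open (@subgroup_of_cyl_open g b).
split.
- by apply: baire_property_ext (baire_property_open (U := set0) _).
- move=> A bA; apply: baire_property_ext (baire_property_compl bA) => z /=.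
  by split=> [nAz|[_ nAz]].
- move=> A bA; apply: baire_property_ext (baire_property_union bA) => z /=.
  by split=> [[k Akz]|[k _ Akz]]; exists k.
Qed.

Lemma subgroup_of_borel_Sub_baire (B : set (heis -> bool)) :
  borel_Sub hmul hinv hone B -> baire_property [set x | B (subgroup_of x)].
Proof.
move=> [B' [bB' ->]]; apply: baire_property_ext (subgroup_of_borel_baire bB') => x.
by split=> [|[]//]; split=> //; exact: subgroup_of_Sub.
Qed.

Theorem proposition8p3 :
  exists (G : countType) (mul : G -> G -> G) (inv : G -> G) (one : G),
    [/\ is_group mul inv one, nilpotent_class2 mul inv & ~ conj_smooth mul inv one].
Proof.
exists heis, hmul, hinv, hone; split; [exact: heis_group | exact: heis_class2 |].
move=> [f [f_borel f_reduction]].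
have reductionE x y : subgroup_conj hmul hinv (subgroup_of x) (subgroup_of y) <->
                      f (subgroup_of x) = f (subgroup_of y).
  exact: f_reduction (subgroup_of_Sub x) (subgroup_of_Sub y).
apply: (@flip_invariant_not_reduction (fun x => f (subgroup_of x))).
- move=> n; have cyl_n : borel2 [set z : nat -> bool | z n = true].
    by apply: sub_sigma_algebra; exists n, true.
  apply: baire_property_ext (subgroup_of_borel_Sub_baire (f_borel _ cyl_n)) => x.
  by split=> [[]//|fxn]; split=> //; exact: subgroup_of_Sub.
- by move=> p x; apply/esym/reductionE/subgroup_of_flip.
- by move=> x y /reductionE/subgroup_of_conj_eventually_eq.
Qed.
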